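(* Let $(S,T,\alpha,\beta)$ be a matched product system of left inverse semi-braces. Then $S\times T$ with the operations $$(a,u)+(b,v)=(a+b,\,u+v),\qquad (a,u)(b,v)=\left(\alpha_u(\alpha_u^{-1}(a)\,b),\ \beta_a(\beta_a^{-1}(u)\,v)\right)$$ for all $(a,u),(b,v)\in S\times T$, is a left inverse semi-brace (called the matched product $S\bowtie T$).
   Context: An inverse semigroup is a semigroup $(S,\cdot)$ in which for each $a$ there is a unique $a^{-1}$ with $aa^{-1}a=a$, $a^{-1}aa^{-1}=a^{-1}$. A left inverse semi-brace is a triple $(S,+,\cdot)$ with $(S,+)$ a semigroup, $(S,\cdot)$ an inverse semigroup and $a(b+c)=ab+a(a^{-1}+c)$ for all $a,b,c$. A matched product system of left inverse semi-braces is a quadruple $(S,T,\alpha,\beta)$ where $S,T$ are left inverse semi-braces, $\alpha:T\to\mathrm{Aut}(S,+)$ is a homomorphism of inverse semigroups from $(T,\cdot)$ into the automorphism group of $(S,+)$, $\beta:S\to\mathrm{Aut}(T,+)$ is a homomorphism of inverse semigroups from $(S,\cdot)$ into the automorphism group of $(T,+)$ (write $\alpha_u=\alpha(u)$, $\beta_a=\beta(a)$, and $\alpha_u^{-1},\beta_a^{-1}$ for the inverse maps), such that for all $a,b\in S$, $u,v\in T$: $\alpha_u(\alpha_u^{-1}(a)\,b)=a\,\alpha_{\beta_a^{-1}(u)}(b)$ and $\beta_a(\beta_a^{-1}(u)\,v)=u\,\beta_{\alpha_u^{-1}(a)}(v)$; and if $\alpha_u(\alpha_u^{-1}(a)\,a)=a$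 and $\beta_a(\beta_a^{-1}(u)\,u)=u$, then $\alpha_u(a)=a$ and $\beta_a(u)=u$. *)

Definition semigroup {S : Type} (op : S -> S -> S) : Prop :=
  forall a b c, op a (op b c) = op (op a b) c.

Definition is_inverse_of {S : Type} (mul : S -> S -> S) (a b : S) : Prop :=
  mul (mul a b) a = a /\ mul (mul b a) b = b.

Definition inverse_semigroup {S : Type} (mul : S -> S -> S) : Prop :=
  semigroup mul /\ forall a, exists! b, is_inverse_of mul a b.

Definition left_inverse_semi_brace {S : Type} (add mul : S -> S -> S) : Prop :=
  semigroup add /\ inverse_semigroup mul /\
  forall a ainv b c, is_inverse_of mul a ainv ->
    mul a (add b c) = add (mul a b) (mul a (add ainv c)).

Definition add_automorphism {S : Type} (add : S -> S -> S) (f finv : S -> S) : Prop :=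
  (forall x y, f (add x y) = add (f x) (f y)) /\
  (forall x, finv (f x) = x) /\ (forall x, f (finv x) = x).

Definition matched_product_system {S T : Type}
  (addS mulS : S -> S -> S) (addT mulT : T -> T -> T)
  (alpha alphainv : T -> S -> S) (beta betainv : S -> T -> T) : Prop :=
  left_inverse_semi_brace addS mulS /\
  left_inverse_semi_brace addT mulT /\
  (forall u, add_automorphism addS (alpha u) (alphainv u)) /\
  (forall a, add_automorphism addT (beta a) (betainv a)) /\
  (forall u v x, alpha (mulT u v) x = alpha u (alpha v x)) /\
  (forall a b y, beta (mulS a b) y = beta a (beta b y)) /\
  (forall a b u, alpha u (mulS (alphainv u a) b) = mulS a (alpha (betainv a u) b)) /\
  (forall a u v, beta a (mulT (betainv a u) v) = mulT u (beta (alphainv u a) v)) /\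
  (forall a u, alpha u (mulS (alphainv u a) a) = a ->
               beta a (mulT (betainv a u) u) = u ->
               alpha u a = a /\ beta a u = u).

Definition mp_add {S T : Type} (addS : S -> S -> S) (addT : T -> T -> T)
  (x y : S * T) : S * T :=
  (addS (fst x) (fst y), addT (snd x) (snd y)).

Definition mp_mul {S T : Type} (mulS : S -> S -> S) (mulT : T -> T -> T)
  (alpha alphainv : T -> S -> S) (beta betainv : S -> T -> T)
  (x y : S * T) : S * T :=
  let (a, u) := x in let (b, v) := y in
  (alpha u (mulS (alphainv u a) b), beta a (mulT (betainv a u) v)).


(* Since [alpha] and [beta] are actions of inverse semigroups by bijections, idempotents act
   trivially and an inverse [u'] of [u] acts as [alphainv u]. With this, the two twisted
   compatibility laws give associativity of the product on S * T, and (a, u) has the inverse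
   (z', w') with z' the inverse of [alphainv u a] and w' that of [betainv a u]. The last axiom
   of a matched product system says precisely that the idempotents of S * T are the pairs of
   idempotents, on which the product is componentwise; so they commute, and a regular semigroup
   with commuting idempotents is an inverse semigroup. The brace identity holds componentwise.
   Every statement about the product is proved for the first component only: the second
   component is the first one for the swapped system (T, S, beta, alpha). *)

Definition idempotent {A : Type} (m : A -> A -> A) (e : A) : Prop := m e e = e.

Section Semigroup.

Context {A : Type} (m : A -> A -> A).
Local Infix "·" := m (at level 40, left associativity).
Hypothesis m_assoc : semigroup m.

Local Ltac assoc_norm := repeat rewrite m_assoc.

Lemma is_inverse_of_sym x y : is_inverse_of m x y -> is_inverse_of m y x.
Proof. intros [I1 I2]. split; assumption. Qed.

Lemma inverse_mul_idempotent x y : is_inverse_of m x y -> idempotent m (x · y).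
Proof. intros [I1 _]. unfold idempotent. rewrite m_assoc, I1. reflexivity. Qed.

Lemma idempotent_inverse e : idempotent m e -> is_inverse_of m e e.
Proof. intro He. split; rewrite !He; reflexivity. Qed.

Lemma idempotent_mulr e p : idempotent m e -> p · e · e = p · e.
Proof. intro He. rewrite <- m_assoc, He. reflexivity. Qed.

Section CommutingIdempotents.

Hypothesis idempotents_comm :
  forall e f, idempotent m e -> idempotent m f -> e · f = f · e.

Lemma inverse_unique_of_idempotents_comm x y y' :
  is_inverse_of m x y -> is_inverse_of m x y' -> y = y'.
Proof.
  intros Hy Hy'.
  pose proof (inverse_mul_idempotent _ _ Hy) as Exy.
  pose proof (inverse_mul_idempotent _ _ Hy') as Exy'.
  pose proof (inverse_mul_idempotent _ _ (is_inverse_of_sym _ _ Hy)) as Eyx.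
  pose proof (inverse_mul_idempotent _ _ (is_inverse_of_sym _ _ Hy')) as Ey'x.
  destruct Hy as [I1 I2], Hy' as [J1 J2].
  assert (Ey : y = y · x · y').
  { transitivity (y · (x · y' · x) · y); [rewrite J1; symmetry; exact I2 |].
    transitivity (y · ((x · y) · (x · y')));
      [rewrite (idempotents_comm _ _ Exy Exy'); assoc_norm; reflexivity |].
    assoc_norm. rewrite I2. reflexivity. }
  assert (Ey' : y' = y · x · y').
  { transitivity (y' · (x · y · x) · y'); [rewrite I1; symmetry; exact J2 |].
    transitivity ((y · x) · (y' · x) · y');
      [rewrite (idempotents_comm _ _ Eyx Ey'x); assoc_norm; reflexivity |].
    transitivity (y · x · (y' · x · y')); [assoc_norm; reflexivity |].
    rewrite J2. reflexivity. }
  congruence.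
Qed.

Lemma inverse_semigroup_of_idempotents_comm :
  (forall x, exists y, is_inverse_of m x y) -> inverse_semigroup m.
Proof.
  intro Hreg. split; [exact m_assoc |]. intro x.
  destruct (Hreg x) as [y Hy]. exists y. split; [exact Hy |].
  intros y' Hy'. exact (inverse_unique_of_idempotents_comm _ _ _ Hy Hy').
Qed.

End CommutingIdempotents.

Section InverseSemigroup.

Hypothesis m_inv : forall x, exists! y, is_inverse_of m x y.

Lemma inverse_semigroup_inverse_unique x y y' :
  is_inverse_of m x y -> is_inverse_of m x y' -> y = y'.
Proof.
  intros Hy Hy'. destruct (m_inv x) as [z [_ Uz]].
  rewrite <- (Uz y Hy), <- (Uz y' Hy'). reflexivity.
Qed.

Lemma idempotent_mul_closed e f :
  idempotent m e -> idempotent m f -> idempotent m (e · f).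
Proof.
  intros He Hf. destruct (m_inv (e · f)) as [x [Hx _]].
  assert (Ex : x = f · x · e).
  { apply (inverse_semigroup_inverse_unique (e · f)); [exact Hx |].
    destruct Hx as [I1 I2]. split.
    - transitivity (e · f · x · (e · f)); [| exact I1].
      assoc_norm. rewrite (idempotent_mulr _ _ Hf), (idempotent_mulr _ _ He).
      reflexivity.
    - transitivity (f · (x · (e · f) · x) · e); [| rewrite I2; reflexivity].
      assoc_norm. rewrite (idempotent_mulr _ _ He), (idempotent_mulr _ _ Hf).
      reflexivity. }
  assert (Hxx : idempotent m x).
  { unfold idempotent.
    transitivity ((f · x · e) · (f · x · e)); [rewrite <- Ex; reflexivity |].
    transitivity (f · (x · (e · f) · x) · e); [assoc_norm; reflexivity |].
    rewrite (proj2 Hx). symmetry. exact Ex. }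
  rewrite <- (inverse_semigroup_inverse_unique x x (e · f)).
  - exact Hxx.
  - exact (idempotent_inverse _ Hxx).
  - exact (is_inverse_of_sym _ _ Hx).
Qed.

Lemma idempotents_comm e f :
  idempotent m e -> idempotent m f -> e · f = f · e.
Proof.
  intros He Hf.
  pose proof (idempotent_mul_closed _ _ He Hf) as Hef.
  pose proof (idempotent_mul_closed _ _ Hf He) as Hfe.
  apply (inverse_semigroup_inverse_unique (e · f)).
  - exact (idempotent_inverse _ Hef).
  - split.
    + transitivity ((e · f) · (e · f)); [| exact Hef].
      assoc_norm. rewrite (idempotent_mulr _ _ Hf), (idempotent_mulr _ _ He).
      reflexivity.
    + transitivity ((f · e) · (f · e)); [| exact Hfe].
      assoc_norm. rewrite (idempotent_mulr _ _ He), (idempotent_mulr _ _ Hf).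
      reflexivity.
Qed.

End InverseSemigroup.

End Semigroup.

Definition bijective_action {T X : Type} (mul : T -> T -> T) (act actinv : T -> X -> X) :
  Prop :=
  (forall u v x, act (mul u v) x = act u (act v x)) /\
  (forall u x, actinv u (act u x) = x) /\
  (forall u x, act u (actinv u x) = x).

Section BijectiveAction.

Context {T X : Type} {mul : T -> T -> T} {act actinv : T -> X -> X}.
Hypothesis act_bij : bijective_action mul act actinv.

Lemma act_mul u v x : act (mul u v) x = act u (act v x).
Proof. apply act_bij. Qed.

Lemma actK u x : actinv u (act u x) = x.
Proof. apply act_bij. Qed.

Lemma actinvK u x : act u (actinv u x) = x.
Proof. apply act_bij. Qed.

Lemma act_inj u x y : act u x = act u y -> x = y.
Proof. intro E. rewrite <- (actK u x), E. apply actK. Qed.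

Lemma act_idempotent e x : idempotent mul e -> act e x = x.
Proof. intro He. apply (act_inj e). rewrite <- act_mul, He. reflexivity. Qed.

Lemma actinv_idempotent e x : idempotent mul e -> actinv e x = x.
Proof. intro He. rewrite <- (act_idempotent e (actinv e x) He). apply actinvK. Qed.

Lemma act_inverse u u' x : is_inverse_of mul u u' -> act u' x = actinv u x.
Proof.
  intros [I1 _]. apply (act_inj u). rewrite actinvK.
  transitivity (act (mul (mul u u') u) (actinv u x)).
  - rewrite !act_mul, actinvK. reflexivity.
  - rewrite I1. apply actinvK.
Qed.

Lemma actinv_inverse u u' x : is_inverse_of mul u u' -> actinv u' x = act u x.
Proof.
  intro Hu. apply (act_inj u'). rewrite actinvK, (act_inverse u u' _ Hu), actK.
  reflexivity.
Qed.

Lemma actinv_mul u v x : actinv (mul u v) (act u x) = actinv v x.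
Proof. apply (act_inj (mul u v)). rewrite actinvK, act_mul, actinvK. reflexivity. Qed.

End BijectiveAction.

Lemma mp_add_semigroup {S T : Type} (addS : S -> S -> S) (addT : T -> T -> T) :
  semigroup addS -> semigroup addT -> semigroup (mp_add addS addT).
Proof.
  intros HS HT [a u] [b v] [c w]. unfold mp_add. simpl. rewrite HS, HT. reflexivity.
Qed.

Section MatchedProductSystem.

Context {S T : Type} {addS mulS : S -> S -> S} {addT mulT : T -> T -> T}
  {alpha alphainv : T -> S -> S} {beta betainv : S -> T -> T}.
Hypothesis M : matched_product_system addS mulS addT mulT alpha alphainv beta betainv.

Local Notation P := (mp_mul mulS mulT alpha alphainv beta betainv).

Lemma matched_product_system_sym :
  matched_product_system addT mulT addS mulS beta betainv alpha alphainv.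
Proof.
  destruct M as (BS & BT & AA & AB & HA & HB & H1 & H2 & HL).
  refine (conj BT (conj BS (conj AB (conj AA (conj HB (conj HA (conj _ (conj _ _)))))))).
  - intros u a b. apply H2.
  - intros u a v. apply H1.
  - intros u a E1 E2. destruct (HL a u E2 E1). split; assumption.
Qed.

Lemma semi_brace_S : left_inverse_semi_brace addS mulS.
Proof. apply M. Qed.

Lemma semi_brace_T : left_inverse_semi_brace addT mulT.
Proof. apply M. Qed.

Lemma mulS_inverse_semigroup : inverse_semigroup mulS.
Proof. apply semi_brace_S. Qed.

Lemma mulT_inverse_semigroup : inverse_semigroup mulT.
Proof. apply semi_brace_T. Qed.

Lemma alpha_action : bijective_action mulT alpha alphainv.
Proof.
  destruct M as (_ & _ & AA & _ & HA & _).
  split; [exact HA | split; intros; apply AA].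
Qed.

Lemma beta_action : bijective_action mulS beta betainv.
Proof.
  destruct M as (_ & _ & _ & AB & _ & HB & _).
  split; [exact HB | split; intros; apply AB].
Qed.

Lemma alpha_add u x y : alpha u (addS x y) = addS (alpha u x) (alpha u y).
Proof. apply M. Qed.

Lemma beta_add a x y : beta a (addT x y) = addT (beta a x) (beta a y).
Proof. apply M. Qed.

Lemma alpha_twisted a u b :
  alpha u (mulS (alphainv u a) b) = mulS a (alpha (betainv a u) b).
Proof. apply M. Qed.

Lemma beta_twisted a u v :
  beta a (mulT (betainv a u) v) = mulT u (beta (alphainv u a) v).
Proof. apply M. Qed.

Lemma alpha_beta_fixed a u :
  alpha u (mulS (alphainv u a) a) = a -> beta a (mulT (betainv a u) u) = u ->
  alpha u a = a /\ beta a u = u.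
Proof. apply M. Qed.

Lemma alpha_mulS u x b :
  alpha u (mulS x b) = mulS (alpha u x) (alpha (betainv (alpha u x) u) b).
Proof. rewrite <- alpha_twisted, (actK alpha_action). reflexivity. Qed.

Lemma betainv_mulT d w v :
  betainv d (mulT w v) = mulT (betainv d w) (betainv (alphainv w d) v).
Proof.
  apply (act_inj beta_action d).
  rewrite (actinvK beta_action), beta_twisted, (actinvK beta_action). reflexivity.
Qed.

Lemma alphainv_mul_idempotent e u b :
  idempotent mulS e -> alphainv u (mulS (alpha u e) b) = mulS e (alphainv u b).
Proof.
  intro He. destruct (proj2 mulT_inverse_semigroup u) as [u' [Hu' _]].
  pose proof (alpha_twisted e u' b) as E.
  rewrite (actinv_inverse alpha_action u u' _ Hu'),
    (actinv_idempotent beta_action e u' He),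
    !(act_inverse alpha_action u u' _ Hu') in E.
  exact E.
Qed.

Lemma alpha_idempotent_closed e u : idempotent mulS e -> idempotent mulS (alpha u e).
Proof.
  intro He. unfold idempotent.
  rewrite <- (actinvK alpha_action u (mulS _ _)), (alphainv_mul_idempotent e u _ He),
    (actK alpha_action), He.
  reflexivity.
Qed.

Lemma mp_mul_assoc_fst x y z : fst (P (P x y) z) = fst (P x (P y z)).
Proof.
  destruct x as [a u], y as [b v], z as [c w]. simpl.
  rewrite alpha_twisted, (alpha_twisted a u b), (alpha_twisted b v c), (alpha_twisted a u _).
  set (d := alpha (betainv a u) b).
  rewrite (actinv_mul beta_action a d), (alpha_mulS _ b), <- (act_mul alpha_action), betainv_mulT.
  fold d. unfold d at 3. rewrite (actK alpha_action).
  symmetry. apply (proj1 mulS_inverse_semigroup).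
Qed.

Lemma mp_mul_idempotent_l e f b v :
  idempotent mulS e -> idempotent mulT f -> P (e, f) (b, v) = (mulS e b, mulT f v).
Proof.
  intros He Hf. simpl.
  rewrite (act_idempotent alpha_action f _ Hf), (actinv_idempotent alpha_action f _ Hf),
    (act_idempotent beta_action e _ He), (actinv_idempotent beta_action e _ He).
  reflexivity.
Qed.

Lemma mp_idempotent_components a u :
  idempotent P (a, u) -> idempotent mulS a /\ idempotent mulT u.
Proof.
  unfold idempotent. simpl. intro E. injection E as Ea Eu.
  destruct (alpha_beta_fixed a u Ea Eu) as [Fa Fu].
  assert (Ga : alphainv u a = a).
  { apply (act_inj alpha_action u). rewrite (actinvK alpha_action). symmetry. exact Fa. }
  assert (Gu : betainv a u = u).
  { apply (act_inj beta_action a). rewrite (actinvK beta_action). symmetry. exact Fu. }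
  rewrite Ga in Ea. rewrite Gu in Eu. split.
  - apply (act_inj alpha_action u). rewrite Ea. symmetry. exact Fa.
  - apply (act_inj beta_action a). rewrite Eu. symmetry. exact Fu.
Qed.

Lemma mp_brace_law_components a u z' w' x y :
  is_inverse_of mulS (alphainv u a) z' -> is_inverse_of mulT (betainv a u) w' ->
  P (a, u) (mp_add addS addT x y) =
  mp_add addS addT (P (a, u) x) (P (a, u) (mp_add addS addT (z', w') y)).
Proof.
  intros Hz Hw. destruct x as [b v], y as [c w]. unfold mp_add. simpl. f_equal.
  - rewrite (proj2 (proj2 semi_brace_S) _ _ _ _ Hz), alpha_add. reflexivity.
  - rewrite (proj2 (proj2 semi_brace_T) _ _ _ _ Hw), beta_add. reflexivity.
Qed.

End MatchedProductSystem.

Section MatchedProductInverses.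

Context {S T : Type} {addS mulS : S -> S -> S} {addT mulT : T -> T -> T}
  {alpha alphainv : T -> S -> S} {beta betainv : S -> T -> T}.
Hypothesis M : matched_product_system addS mulS addT mulT alpha alphainv beta betainv.

Local Notation P := (mp_mul mulS mulT alpha alphainv beta betainv).

Let beta_idempotent_closed := alpha_idempotent_closed (matched_product_system_sym M).

Lemma mp_mul_inverse_r_fst a u z' w' :
  is_inverse_of mulS (alphainv u a) z' -> is_inverse_of mulT (betainv a u) w' ->
  fst (P (P (a, u) (z', w')) (a, u)) = a.
Proof.
  intros Hz Hw. simpl.
  pose proof (inverse_mul_idempotent _ (proj1 (mulS_inverse_semigroup M)) _ _ Hz) as Ie.
  pose proof (inverse_mul_idempotent _ (proj1 (mulT_inverse_semigroup M)) _ _ Hw) as If.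
  pose proof (beta_idempotent_closed _ a If) as Iq.
  rewrite (actinv_idempotent (alpha_action M) _ _ Iq), (act_idempotent (alpha_action M) _ _ Iq).
  rewrite <- (actinvK (alpha_action M) u (mulS _ a)), (alphainv_mul_idempotent M _ u a Ie),
    (proj1 Hz), (actinvK (alpha_action M)).
  reflexivity.
Qed.

Lemma mp_mul_inverse_l_fst a u z' w' :
  is_inverse_of mulS (alphainv u a) z' -> is_inverse_of mulT (betainv a u) w' ->
  fst (P (z', w') (a, u)) = mulS z' (alphainv u a).
Proof.
  intros Hz Hw. simpl. rewrite (alpha_twisted M). f_equal.
  rewrite (actinv_inverse (beta_action M) _ _ _ Hz).
  apply (act_inj (alpha_action M) u).
  rewrite (actinvK (alpha_action M)), <- (act_mul (alpha_action M)), <- (beta_twisted M).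
  apply (act_idempotent (alpha_action M)), beta_idempotent_closed.
  exact (inverse_mul_idempotent _ (proj1 (mulT_inverse_semigroup M)) _ _ Hw).
Qed.

End MatchedProductInverses.

Section MatchedProduct.

Context {S T : Type} {addS mulS : S -> S -> S} {addT mulT : T -> T -> T}
  {alpha alphainv : T -> S -> S} {beta betainv : S -> T -> T}.
Hypothesis M : matched_product_system addS mulS addT mulT alpha alphainv beta betainv.

Local Notation P := (mp_mul mulS mulT alpha alphainv beta betainv).
Local Notation M' := (matched_product_system_sym M).

Let mulS_assoc := proj1 (mulS_inverse_semigroup M).
Let mulT_assoc := proj1 (mulT_inverse_semigroup M).

Lemma mp_mul_assoc : semigroup P.
Proof.
  intros [a u] [b v] [c w]. symmetry. apply injective_projections.
  - apply (mp_mul_assoc_fst M).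
  - exact (mp_mul_assoc_fst M' (u, a) (v, b) (w, c)).
Qed.

Lemma mp_mul_inverse a u z' w' :
  is_inverse_of mulS (alphainv u a) z' -> is_inverse_of mulT (betainv a u) w' ->
  is_inverse_of P (a, u) (z', w').
Proof.
  intros Hz Hw. split.
  - apply injective_projections.
    + exact (mp_mul_inverse_r_fst M a u z' w' Hz Hw).
    + exact (mp_mul_inverse_r_fst M' u a w' z' Hw Hz).
  - assert (E : P (z', w') (a, u) = (mulS z' (alphainv u a), mulT w' (betainv a u))).
    { apply injective_projections.
      + exact (mp_mul_inverse_l_fst M a u z' w' Hz Hw).
      + exact (mp_mul_inverse_l_fst M' u a w' z' Hw Hz). }
    rewrite E, (mp_mul_idempotent_l M).
    + rewrite (proj2 Hz), (proj2 Hw). reflexivity.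
    + exact (inverse_mul_idempotent _ mulS_assoc _ _ (is_inverse_of_sym _ _ _ Hz)).
    + exact (inverse_mul_idempotent _ mulT_assoc _ _ (is_inverse_of_sym _ _ _ Hw)).
Qed.

Lemma mp_mul_regular x : exists y, is_inverse_of P x y.
Proof.
  destruct x as [a u].
  destruct (proj2 (mulS_inverse_semigroup M) (alphainv u a)) as [z' [Hz _]].
  destruct (proj2 (mulT_inverse_semigroup M) (betainv a u)) as [w' [Hw _]].
  exists (z', w'). exact (mp_mul_inverse a u z' w' Hz Hw).
Qed.

Lemma mp_idempotents_comm e f : idempotent P e -> idempotent P f -> P e f = P f e.
Proof.
  destruct e as [e1 e2], f as [f1 f2]. intros He Hf.
  destruct (mp_idempotent_components M _ _ He) as [He1 He2].
  destruct (mp_idempotent_components M _ _ Hf) as [Hf1 Hf2].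
  rewrite !(mp_mul_idempotent_l M) by assumption.
  rewrite (idempotents_comm _ mulS_assoc (proj2 (mulS_inverse_semigroup M)) e1 f1 He1 Hf1),
    (idempotents_comm _ mulT_assoc (proj2 (mulT_inverse_semigroup M)) e2 f2 He2 Hf2).
  reflexivity.
Qed.

Lemma mp_mul_inverse_semigroup : inverse_semigroup P.
Proof.
  exact (inverse_semigroup_of_idempotents_comm P mp_mul_assoc mp_idempotents_comm
    mp_mul_regular).
Qed.

Lemma mp_brace_law x x' y z :
  is_inverse_of P x x' ->
  P x (mp_add addS addT y z) =
  mp_add addS addT (P x y) (P x (mp_add addS addT x' z)).
Proof.
  destruct x as [a u]. intro Hx'.
  destruct (proj2 (mulS_inverse_semigroup M) (alphainv u a)) as [z' [Hz _]].
  destruct (proj2 (mulT_inverse_semigroup M) (betainv a u)) as [w' [Hw _]].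
  rewrite (inverse_semigroup_inverse_unique P (proj2 mp_mul_inverse_semigroup) _ _ _ Hx'
    (mp_mul_inverse a u z' w' Hz Hw)).
  exact (mp_brace_law_components M a u z' w' y z Hz Hw).
Qed.

End MatchedProduct.

Theorem theorem24 (S T : Type)
  (addS mulS : S -> S -> S) (addT mulT : T -> T -> T)
  (alpha alphainv : T -> S -> S) (beta betainv : S -> T -> T) :
  matched_product_system addS mulS addT mulT alpha alphainv beta betainv ->
  left_inverse_semi_brace (mp_add addS addT)
    (mp_mul mulS mulT alpha alphainv beta betainv).
Proof.
  intro M. split; [| split].
  - apply mp_add_semigroup; [apply (semi_brace_S M) | apply (semi_brace_T M)].
  - exact (mp_mul_inverse_semigroup M).
  - exact (mp_brace_law M).
Qed.
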